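(* Let $M=p_i^{n_i}p_j^{n_j}p_k^{n_k}$ with distinct primes $p_i,p_j,p_k$ and $n_i,n_j,n_k\in\mathbb{N}$, let $A\oplus B=\mathbb{Z}_M$ with $\Phi_M(X)\mid A(X)$, and assume $A$ is fibered on $D$-grids, where $D=M/(p_ip_jp_k)$. Let $a,a'\in A$ and $b,b'\in B$. If $(b*F(a))\cap(b'*F(a'))\neq\emptyset$, then $b=b'$ and $F(a)=F(a')$.
   Context: $A\oplus B=\mathbb{Z}_M$ means every element of $\mathbb{Z}_M$ is uniquely $a+b$, $a\in A$, $b\in B$; $A(X)=\sum_{a\in A}X^a$ ($A$ in $\{0,\dots,M-1\}$), $\Phi_M$ the $M$-th cyclotomic polynomial. For $d\mid M$, $\Lambda(x,d)=\{x'\in\mathbb{Z}_M:d\mid x-x'\}$. For $\nu\in\{i,j,k\}$, $F_\nu=\{0,M/p_\nu,\dots,(p_\nu-1)M/p_\nu\}$, $x*Y=\{x+y:y\in Y\}$. A set $Y$ is fibered in the $p_\nu$ direction if $Y$ is a union of sets $y*F_\nu$ with $y\in Y$. ''$A$ is fibered on $D$-grids'' means for every $a\in A$, $A\cap\Lambda(a,D)$ is fibered in some direction $p_\nu$. The function $\kappa:A\to\{i,j,k\}$: for each $D$-grid $\Lambda(x,D)$ meeting $A$, fix one direction $\nu(x)$ in which $A\cap\Lambda(x,D)$ is fibered (chosen arbitrarily if several) and set $\kappa(a)=\nu(x)$ for all $a\in A\cap\Lambda(x,D)$. Define $F(a)=a*F_{\kappa(a)}$ for $a\in A$ (so $F(a)\subset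 A$). *)

From HB Require Import structures.
From mathcomp Require Import all_boot all_order all_algebra.
From mathcomp Require Import cyclotomic.
Unset Printing Implicit Defensive.
Import GRing.Theory.
Local Open Scope ring_scope.

(* Z_M is 'Z_M (M > 1 in our setting); directions i,j,k are indexed by 'I_3. *)

Definition tiling (M : nat) (A B : {set 'Z_M}) : Prop :=
  forall z : 'Z_M, exists! ab : 'Z_M * 'Z_M,
    [/\ ab.1 \in A, ab.2 \in B & ab.1 + ab.2 = z].

Definition mask_poly (M : nat) (A : {set 'Z_M}) : {poly int} :=
  \sum_(a in A) 'X^(val a).

Definition shift (M : nat) (x : 'Z_M) (Y : {set 'Z_M}) : {set 'Z_M} :=
  [set x + y | y in Y].

Definition Fdir (M : nat) (p : 'I_3 -> nat) (nu : 'I_3) : {set 'Z_M} :=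
  [set ((val t * (M %/ p nu))%N%:R : 'Z_M) | t : 'I_(p nu)].

Definition fibered_dir (M : nat) (p : 'I_3 -> nat) (Y : {set 'Z_M}) (nu : 'I_3)
  : Prop := forall y, y \in Y -> shift M y (Fdir M p nu) \subset Y.

Definition grid (M : nat) (d : nat) (x : 'Z_M) : {set 'Z_M} :=
  [set x' : 'Z_M | (d %| val (x - x')%R)%N].

Definition fibered_on_grids (M : nat) (p : 'I_3 -> nat) (D : nat)
  (A : {set 'Z_M}) : Prop :=
  forall a, a \in A -> exists nu : 'I_3, fibered_dir M p (A :&: grid M D a) nu.

Definition kappa_choice (M : nat) (p : 'I_3 -> nat) (D : nat)
  (A : {set 'Z_M}) (kappa : 'Z_M -> 'I_3) : Prop :=
  (forall a, a \in A -> fibered_dir M p (A :&: grid M D a) (kappa a)) /\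
  (forall a a', a \in A -> a' \in A -> a' \in grid M D a -> kappa a = kappa a').

Definition Ffib (M : nat) (p : 'I_3 -> nat) (kappa : 'Z_M -> 'I_3) (a : 'Z_M)
  : {set 'Z_M} := shift M a (Fdir M p (kappa a)).

From HB Require Import structures.
From mathcomp Require Import all_boot all_order all_algebra.
From mathcomp Require Import cyclotomic.
Import GRing.Theory.

(* Two points of b * F(a) and b' * F(a') that coincide are two decompositions
   of the same element of Z_M, so the tiling forces b = b'.  What remains is
   that the fibers F(a) partition A: if x lies in F(a) and F(a'), then a - a'
   is a multiple of D, so a and a' lie in the same D-grid and kappa a = kappa a';
   then a - a' lies in the subgroup F_(kappa a), whose cosets are F(a), F(a'). *)

Lemma dvdn_modE d m n : (d %| m)%N -> (d %| n %% m)%N = (d %| n)%N.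
Proof. by move=> dm; rewrite /dvdn modn_dvdm. Qed.

Lemma dvdn_divn d e m : (d %| m)%N -> (e %| d)%N -> (m %/ d %| m %/ e)%N.
Proof.
move=> dm ed; rewrite dvdn_divRL ?(dvdn_trans ed) //.
by rewrite -{2}(divnK dm) dvdn_mul.
Qed.

Lemma dvdn_prod_pow (k : nat) (p n : 'I_k -> nat) :
  (forall i, 0 < n i)%N -> (\prod_(i < k) p i %| \prod_(i < k) p i ^ n i)%N.
Proof.
move=> n_gt0; apply: (big_ind2 (fun x y => x %| y)%N) => // [x1 x2 y1 y2|i _].
  exact: dvdn_mul.
exact: dvdn_exp.
Qed.

Lemma tiling_sum_inj M (A B : {set 'Z_M}) (a a' b b' : 'Z_M) :
  tiling M A B -> a \in A -> a' \in A -> b \in B -> b' \in B ->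
  (a + b = a' + b')%R -> a = a' /\ b = b'.
Proof.
move=> til aA a'A bB b'B eq_ab; have [ab [_ uniq_ab]] := til (a + b)%R.
have := uniq_ab (a, b) (And3 aA bB erefl).
by rewrite (uniq_ab (a', b') (And3 a'A b'B (esym eq_ab))); case.
Qed.

Definition multiples (M d : nat) : {set 'Z_M} := [set x : 'Z_M | (d %| val x)%N].

Section Multiples.

Variables (M d : nat).
Hypotheses (M_gt1 : (1 < M)%N) (d_dvdM : (d %| M)%N).

Lemma multiplesD (x y : 'Z_M) :
  x \in multiples M d -> y \in multiples M d -> (x + y)%R \in multiples M d.
Proof.
by rewrite !inE /= => dx dy; rewrite dvdn_modE ?dvdn_add ?Zp_cast.
Qed.

Lemma multiplesN (x : 'Z_M) : x \in multiples M d -> (- x)%R \in multiples M d.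
Proof.
by rewrite !inE /= => dx; rewrite dvdn_modE ?dvdn_sub ?Zp_cast.
Qed.

Lemma multiplesB (x y : 'Z_M) :
  x \in multiples M d -> y \in multiples M d -> (x - y)%R \in multiples M d.
Proof. by move=> dx dy; rewrite multiplesD ?multiplesN. Qed.

Lemma shift_multiples (x y : 'Z_M) :
  (x - y)%R \in multiples M d -> shift M x (multiples M d) = shift M y (multiples M d).
Proof.
wlog suff: x y / (x - y)%R \in multiples M d ->
  shift M x (multiples M d) \subset shift M y (multiples M d).
  move=> sub dxy; apply/eqP; rewrite eqEsubset sub //=.
  by rewrite sub // -opprB multiplesN.
move=> dxy; apply/subsetP => _ /imsetP [z dz ->].
apply/imsetP; exists (x - y + z)%R; first exact: multiplesD.
by rewrite addrA [(y + _)%R]addrC subrK.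
Qed.

End Multiples.

Lemma multiples_dvd {M d e} {x : 'Z_M} :
  (e %| d)%N -> x \in multiples M d -> x \in multiples M e.
Proof. by rewrite !inE; apply: dvdn_trans. Qed.

Lemma grid_multiplesE M D (x y : 'Z_M) :
  (y \in grid M D x) = ((x - y)%R \in multiples M D).
Proof. by rewrite !inE. Qed.

Lemma Fdir_multiples M (p : 'I_3 -> nat) nu :
  (1 < M)%N -> (0 < p nu)%N -> (p nu %| M)%N -> Fdir M p nu = multiples M (M %/ p nu).
Proof.
move=> M_gt1 p_gt0 pM; apply/setP => x; rewrite inE.
apply/imsetP/idP => [[t _ ->]|].
  by rewrite [val _](val_Zp_nat M_gt1) dvdn_modE ?dvdn_mull ?dvdn_div.
have q_gt0 : (0 < M %/ p nu)%N by rewrite divn_gt0 // dvdn_leq // ltnW.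
case/dvdnP=> k xE; have k_lt : (k < p nu)%N.
  rewrite -(ltn_pmul2r q_gt0) -xE mulnC divnK //.
  by apply: leq_trans (ltn_ord x) _; rewrite Zp_cast.
by exists (Ordinal k_lt) => //=; rewrite -xE natr_Zp.
Qed.

Section Fibers.

Context {M D : nat} {p : 'I_3 -> nat} {A : {set 'Z_M}} {kappa : 'Z_M -> 'I_3}.
Hypotheses (M_gt1 : (1 < M)%N) (p_gt0 : forall nu, (0 < p nu)%N).
Hypotheses (p_dvdM : forall nu, (p nu %| M)%N) (D_dvd : forall nu, (D %| M %/ p nu)%N).
Hypothesis kappaP : kappa_choice M p D A kappa.

Lemma Ffib_subset a : a \in A -> Ffib M p kappa a \subset A.
Proof.
move=> aA; apply: subset_trans (subsetIl A (grid M D a)).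
by apply: kappaP.1; rewrite // inE aA grid_multiplesE subrr inE dvdn0.
Qed.

Lemma Ffib_eq a a' : a \in A -> a' \in A ->
  Ffib M p kappa a :&: Ffib M p kappa a' != set0 -> Ffib M p kappa a = Ffib M p kappa a'.
Proof.
move=> aA a'A /set0Pn [_ /setIP [/imsetP [f f_in ->] /imsetP [f' f'_in eq_af]]].
rewrite Fdir_multiples // in f_in; rewrite Fdir_multiples // in f'_in.
have D_dvdM : (D %| M)%N := dvdn_trans (D_dvd ord0) (dvdn_div (p_dvdM ord0)).
have diffE : (a - a' = f' - f)%R.
  by rewrite -[a](addrK f) eq_af addrAC [(a' + f')%R]addrC addrK.
have same_kappa : kappa a = kappa a'.
  apply: kappaP.2; rewrite // grid_multiplesE diffE.
  by rewrite multiplesB // (multiples_dvd (D_dvd _) f_in, multiples_dvd (D_dvd _) f'_in).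
rewrite /Ffib -same_kappa Fdir_multiples //.
apply: shift_multiples; rewrite ?dvdn_div // diffE multiplesB ?dvdn_div //.
by rewrite same_kappa.
Qed.

End Fibers.

Theorem lemma7p3 (p n : 'I_3 -> nat) (M : nat) (A B : {set 'Z_M})
  (kappa : 'Z_M -> 'I_3) (a a' b b' : 'Z_M) :
  (forall i, prime (p i)) -> injective p -> (forall i, 0 < n i)%N ->
  M = (\prod_(i < 3) p i ^ n i)%N ->
  tiling M A B ->
  ('Phi_M %| mask_poly M A)%R ->
  fibered_on_grids M p (M %/ \prod_(i < 3) p i)%N A ->
  kappa_choice M p (M %/ \prod_(i < 3) p i)%N A kappa ->
  a \in A -> a' \in A -> b \in B -> b' \in B ->
  shift M b (Ffib M p kappa a) :&: shift M b' (Ffib M p kappa a') != set0 ->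
  b = b' /\ Ffib M p kappa a = Ffib M p kappa a'.
Proof.
move=> p_prime _ n_gt0 ME til _ _ kappaP aA a'A bB b'B.
case/set0Pn=> _ /setIP [/imsetP [x xFa ->] /imsetP [x' x'Fa' eq_bx]].
set P := (\prod_(i < 3) p i)%N in kappaP.
have p_gt0 nu : (0 < p nu)%N := prime_gt0 (p_prime nu).
have P_dvdM : (P %| M)%N by rewrite ME dvdn_prod_pow.
have p_dvdP nu : (p nu %| P)%N by rewrite /P (bigD1 nu) //= dvdn_mulr.
have p_dvdM nu : (p nu %| M)%N := dvdn_trans (p_dvdP nu) P_dvdM.
have M_gt1 : (1 < M)%N.
  have M_gt0 : (0 < M)%N by rewrite ME prodn_gt0 // => i; rewrite expn_gt0 p_gt0.
  exact: leq_trans (prime_gt1 (p_prime ord0)) (dvdn_leq M_gt0 (p_dvdM ord0)).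
have D_dvd nu : (M %/ P %| M %/ p nu)%N by apply: dvdn_divn.
have xA : x \in A := subsetP (Ffib_subset kappaP a aA) _ xFa.
have x'A : x' \in A := subsetP (Ffib_subset kappaP a' a'A) _ x'Fa'.
have [xx' <-] : x = x' /\ b = b'.
  by apply: tiling_sum_inj til xA x'A bB b'B _; rewrite addrC eq_bx addrC.
split => //; apply: (Ffib_eq M_gt1 p_gt0 p_dvdM D_dvd kappaP _ _ aA a'A).
by apply/set0Pn; exists x; rewrite inE xFa xx' x'Fa'.
Qed.
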